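(* Let $n,N\ge1$, $1\le b\le n$, and let $J\subseteq\mathbb{Z}_n$ with $|J|=g>0$. Let $\mathbf{c}=(b_{1,1},\dots,b_{n,1},b_{1,2},\dots,b_{n,2},\dots,b_{1,N},\dots,b_{n,N})\in\mathbb{F}_q^{nN}$ and let $\Delta(\mathbf{c})=(b_{i,j})$ be the associated $n\times N$ matrix. Suppose that for each $i\in J$ the $i$-th row of $\Delta(\mathbf{c})$ has exactly $\ell$ nonzero entries, and all other rows of $\Delta(\mathbf{c})$ are zero. Then $$w_b(\mathbf{c})\ge \ell\Big(g+\sum_{H\in\mathbb{H}(J),\,|H|\le b-1}|H|+\sum_{H\in\mathbb{H}(J),\,|H|\ge b}(b-1)\Big),$$ where $w_b(\mathbf{c})$ is the $b$-symbol weight of $\mathbf{c}$ as a vector of length $nN$.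
   Context: For a vector of length $L$, indices are in $\mathbb{Z}_L=\{1,\dots,L\}$ taken cyclically mod $L$. For $\mathbf{x}\in\mathbb{F}_q^L$, $\chi_b(\mathbf{x})=\{i\in\mathbb{Z}_L:(x_i,\dots,x_{i+b-1})\ne\mathbf{0}\}$ (indices mod $L$) and $w_b(\mathbf{x})=|\chi_b(\mathbf{x})|$. For $J\subseteq\mathbb{Z}_n$, a hole of $J$ of size $h\ge 1$ is a set $H=\{a+1,\dots,a+h\}\subseteq\mathbb{Z}_n\setminus J$ (indices mod $n$) with $a,a+h+1\in J$; $\mathbb{H}(J)$ is the set of all holes of $J$. The vector $\mathbf{c}\in\mathbb{F}_q^{nN}$ is identified with the $n\times N$ matrix $\Delta(\mathbf{c})$ whose $(i,j)$ entry $b_{i,j}$ is the coordinate of $\mathbf{c}$ in position $i+(j-1)n$. *)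

(* Indices are 0-based: Z_L = {0,...,L-1} taken mod L. *)
From mathcomp Require Import all_boot all_order all_algebra.
Set Implicit Arguments. Unset Strict Implicit. Unset Printing Implicit Defensive.
Import GRing.Theory.
Local Open Scope ring_scope.

(* coordinate of x at natural position m (0 if m is out of range; only used
   with m < L) *)
Definition coord_at (F : nzRingType) (L : nat) (x : 'rV[F]_L) (m : nat) : F :=
  if insub m is Some i then x ord0 i else 0.

Definition chi_b (F : nzRingType) (L b : nat) (x : 'rV[F]_L) : {set 'I_L} :=
  [set i : 'I_L | [exists k : 'I_b, coord_at x ((i + k) %% L)%N != 0]].

Definition w_b (F : nzRingType) (L b : nat) (x : 'rV[F]_L) : nat := #|chi_b b x|.

(* Delta(c): the n x N matrix with (i,j) entry the coordinate of c at
   position i + j*n (0-based version of i + (j-1)n) *)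
Definition Delta (F : nzRingType) (n N : nat) (c : 'rV[F]_(n * N)) : 'M[F]_(n, N) :=
  \matrix_(i < n, j < N) coord_at c (i + j * n)%N.

Definition inJ (n : nat) (J : {set 'I_n}) (m : nat) : bool :=
  [exists x in J, val x == (m %% n)%N].

(* H is a hole of J: H = {a+1,...,a+h} (mod n), h >= 1, disjoint from J,
   with a, a+h+1 in J.  (a and h range over 'I_n; a hole necessarily has
   h <= n-1, since a+n = a mod n lies in J.) *)
Definition is_hole (n : nat) (J : {set 'I_n}) (H : {set 'I_n}) : bool :=
  [exists a : 'I_n, exists h : 'I_n,
    [&& (0 < h)%N, a \in J, inJ J (a + h + 1)%N,
        [forall k : 'I_n, ((0 < k) && (k <= h))%N ==> ~~ inJ J (a + k)%N] &
        H == [set x : 'I_n | [exists k : 'I_n,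
                 [&& (0 < k)%N, (k <= h)%N & val x == ((a + k) %% n)%N]]]]].

Definition holes (n : nat) (J : {set 'I_n}) : {set {set 'I_n}} :=
  [set H | is_hole J H].

(* Let the shadow of [J] be the set of residues r such that one of
   r, r+1, ..., r+b-1 lies in [J].  For r in the shadow, pick e = r+k in [J]
   with k < b: each of the [l] nonzero entries of row e of Delta(c), shifted
   left by k, is a position of chi_b(c) congruent to r mod n, so
   w_b(c) >= l * |shadow|.  The shadow contains [J] and, in every hole H,
   the last min(|H|, b-1) points of H, which are within b-1 of the element
   of [J] closing the hole; the holes are pairwise disjoint and disjoint from
   [J], so |shadow| >= g + sum_H min(|H|, b-1). *)

From mathcomp Require Import all_boot all_order all_algebra zify.
Set Implicit Arguments. Unset Strict Implicit. Unset Printing Implicit Defensive.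

Local Open Scope nat_scope.

Section Holes.
Variables (n : nat) (J : {set 'I_n}).

Lemma inJ_eqmod m1 m2 : m1 = m2 %[mod n] -> inJ J m1 = inJ J m2.
Proof. by rewrite /inJ => ->. Qed.

Lemma inJ_mem (x : 'I_n) : x \in J -> inJ J x.
Proof.
by move=> xJ; apply/existsP; exists x; rewrite xJ modn_small ?eqxx ?ltn_ord.
Qed.

Lemma holeP H : is_hole J H ->
  exists (a : 'I_n) (h : nat), [/\ 0 < h < n, a \in J, inJ J (a + h + 1),
   forall d, 0 < d <= h -> ~~ inJ J (a + d)
 & forall x : 'I_n, x \in H <-> exists2 k, 0 < k <= h & val x = (a + k) %% n].
Proof.
case/existsP=> a /existsP [h /and5P [h0 aJ hJ /forallP hf /eqP ->]].
exists a, h; split => //; first by rewrite h0 ltn_ord.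
- move=> d /andP[d0 dh]; have dn : d < n by apply: leq_ltn_trans dh (ltn_ord h).
  by have := hf (Ordinal dn); rewrite /= d0 dh.
- move=> x; rewrite inE; split.
    by case/existsP=> k /and3P[k0 kh /eqP e]; exists k => //; rewrite k0.
  case=> k /andP[k0 kh] e; apply/existsP.
  have kn : k < n by apply: leq_ltn_trans kh (ltn_ord h).
  by exists (Ordinal kn); rewrite /= k0 kh e eqxx.
Qed.

Lemma hole_disjoint H : is_hole J H -> [disjoint H & J].
Proof.
case/holeP => a [h [_ _ _ notJ memH]]; rewrite disjoint_subset.
apply/subsetP => x /memH [k kh ex]; apply/negP => /inJ_mem xJ.
by have := notJ k kh; rewrite (@inJ_eqmod _ x) ?xJ // ex modn_mod.
Qed.

Lemma hole_offset_leq (a1 a2 : 'I_n) h2 k1 k2 : a1 \in J ->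
  (forall d, 0 < d <= h2 -> ~~ inJ J (a2 + d)) -> k2 <= h2 ->
  a1 + k1 = a2 + k2 %[mod n] -> k2 <= k1.
Proof.
move=> a1J notJ k2h e; rewrite leqNgt; apply/negP => lt12.
have /negP[] : ~~ inJ J (a2 + (k2 - k1)).
  by apply: notJ; rewrite subn_gt0 lt12 (leq_trans (leq_subr _ _) k2h).
rewrite (@inJ_eqmod _ a1) ?inJ_mem //; apply/eqP.
by rewrite -(eqn_modDr k1) -addnA subnK ?(ltnW lt12) // e.
Qed.

Lemma hole_length_leq (a : 'I_n) h1 h2 : inJ J (a + h1 + 1) ->
  (forall d, 0 < d <= h2 -> ~~ inJ J (a + d)) -> h2 <= h1.
Proof.
move=> endJ notJ; rewrite leqNgt; apply/negP => lt.
by have /negP[] := notJ h1.+1 lt; rewrite -addn1 addnA.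
Qed.

(* A point of a hole determines its left end [a] and offset [k]: any
   smaller offset from another end in [J] would put an element of [J]
   inside the hole. *)
Lemma holes_trivIset : trivIset (holes J).
Proof.
apply/trivIsetP => H1 H2; rewrite !inE => /holeP[a1 [h1 [_ a1J e1J notJ1 mem1]]].
move=> /holeP[a2 [h2 [_ a2J e2J notJ2 mem2]]] neqH.
rewrite disjoint_subset; apply/subsetP => x /mem1[k1 /andP[_ k1h] ex1].
apply/negP => /mem2[k2 /andP[_ k2h] ex2].
have e : a1 + k1 = a2 + k2 %[mod n] by rewrite -ex1 -ex2.
have ek : k1 = k2.
  by apply/eqP; rewrite eqn_leq (hole_offset_leq a2J notJ1 k1h (esym e))
                        (hole_offset_leq a1J notJ2 k2h e).
have ea : a1 = a2.
  by apply: val_inj; move/eqP: e; rewrite ek eqn_modDr !modn_small // => /eqP.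
subst k2 a2.
have eh : h1 = h2.
  by apply/eqP; rewrite eqn_leq (hole_length_leq e2J notJ1) (hole_length_leq e1J notJ2).
subst h2; case/eqP: neqH; apply/setP => y.
by apply/idP/idP => [/mem1|/mem2] ?; [apply/mem2 | apply/mem1].
Qed.

End Holes.

Lemma card_cover_setI (T : finType) (P : {set {set T}}) (A : {set T}) :
  trivIset P -> \sum_(H in P) #|H :&: A| = #|cover P :&: A|.
Proof.
move=> tiP; rewrite -sum1_card (eq_bigl (fun x => (x \in cover P) && (x \in A))).
  by rewrite big_trivIset_cond //; apply: eq_bigr => H _; rewrite -sum1_card;
     apply: eq_bigl => x; rewrite inE.
by move=> x; rewrite inE.
Qed.

Lemma sum_minn_split (I : finType) (P : pred I) (f : I -> nat) (m : nat) :
  \sum_(i | P i) minn (f i) m =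
    \sum_(i | P i && (f i <= m)) f i + \sum_(i | P i && (m < f i)) m.
Proof.
rewrite (bigID (fun i => f i <= m)) /=; congr (_ + _).
  by apply: eq_bigr => i /andP[_ /minn_idPl].
by apply: eq_big => [i | i /andP[_]]; rewrite -ltnNge // => /ltnW/minn_idPr.
Qed.

Section Shadow.
Variables (n b : nat) (J : {set 'I_n}).

Definition shadow : {set 'I_n} := [set r : 'I_n | [exists k : 'I_b, inJ J (r + k)]].

Lemma card_mod_interval_leq (H : {set 'I_n}) (a h : nat) :
  (forall x : 'I_n, x \in H -> exists2 k, 0 < k <= h & val x = (a + k) %% n) ->
  #|H| <= h.
Proof.
move=> memH; have [n0 | n_gt0] := posnP n.
  by rewrite (leq_trans (max_card _)) // card_ord n0.
 pose f (k : 'I_h) := Ordinal (ltn_pmod (a + k.+1) n_gt0).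
apply: leq_trans (_ : #|[set f k | k in 'I_h]| <= h); last first.
  by rewrite (leq_trans (leq_imset_card _ _)) // card_ord.
apply: subset_leq_card; apply/subsetP => x /memH [k /andP[k0 kh] ex].
have kh' : k.-1 < h by rewrite prednK.
by apply/imsetP; exists (Ordinal kh') => //; apply: val_inj; rewrite /= prednK.
Qed.

(* The last [min(h, b - 1)] points of a hole of length [h] lie within
   distance [b - 1] to the left of its right end, which is in [J]. *)
Lemma hole_shadow_card H : is_hole J H -> 0 < b ->
  minn #|H| (b - 1) <= #|H :&: shadow|.
Proof.
case/holeP => a [h [/andP[h0 hn] aJ endJ notJ memH]] b0.
have n0 : 0 < n by apply: leq_ltn_trans (leq0n a) (ltn_ord a).
have cardH : #|H| <= h.
  by apply: (card_mod_interval_leq (a := a)) => x /memH[k kh ex]; exists k.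
set m := minn h (b - 1).
pose f (i : 'I_m) := Ordinal (ltn_pmod (a + (h - i)) n0).
have f_inj : injective f.
  move=> i j /(congr1 val) /eqP /=; rewrite eqn_modDl !modn_small; try lia.
  by move=> /eqP E; apply: val_inj => /=; have := ltn_ord i; have := ltn_ord j; lia.
apply: leq_trans (_ : m <= _).
  by rewrite leq_min geq_minr andbT (leq_trans (geq_minl _ _) cardH).
rewrite -{1}(card_ord m) -(card_imset _ f_inj).
apply: subset_leq_card; apply/subsetP => _ /imsetP [i _ ->].
have im := ltn_ord i; rewrite !inE; apply/andP; split.
  by apply/memH; exists (h - i) => //; apply/andP; split; lia.
have ib : i.+1 < b by lia.
apply/existsP; exists (Ordinal ib) => /=.
by rewrite (@inJ_eqmod _ _ _ (a + h + 1)) // modnDml; congr (_ %% _); lia.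
Qed.

Lemma card_shadow_ge : 0 < b ->
  #|J| + \sum_(H in holes J) minn #|H| (b - 1) <= #|shadow|.
Proof.
move=> b0.
have J_shadow : J \subset shadow.
  apply/subsetP => x xJ; rewrite inE; apply/existsP; exists (Ordinal b0).
  by rewrite /= addn0 inJ_mem.
have J_holes : [disjoint J & cover (holes J) :&: shadow].
  apply: disjointWr (subsetIl _ _) _; apply: bigcup_disjoint => H.
  by rewrite inE disjoint_sym => /hole_disjoint.
apply: leq_trans (_ : #|J| + #|cover (holes J) :&: shadow| <= _).
  rewrite leq_add2l -card_cover_setI ?holes_trivIset //.
  by apply: leq_sum => H; rewrite inE => /hole_shadow_card; apply.
rewrite -cardsUI (disjoint_setI0 J_holes) cards0 addn0; apply: subset_leq_card.
by rewrite subUset J_shadow subsetIr.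
Qed.

End Shadow.

Section Weight.
Variables (F : nzRingType) (n N b : nat) (c : 'rV[F]_(n * N)).

Definition residue_class (r : 'I_n) : {set 'I_(n * N)} :=
  [set p in chi_b b c | p %% n == r].

(* Entry [j] of row [e] sits at position [e + j n]; the position [k] to
   its left is in [chi_b] (its window of length [b] contains that entry)
   and is congruent to [r]. *)
Lemma row_support_le_residue_class (e r : 'I_n) (k : 'I_b) :
  b <= n -> r + k = e %[mod n] ->
  #|[set j : 'I_N | (Delta c e j != 0)%R]| <= #|residue_class r|.
Proof.
move=> bn erk.
have L_gt0 (j : 'I_N) : 0 < n * N.
  by rewrite muln_gt0 (leq_ltn_trans _ (ltn_ord e)) ?(leq_ltn_trans _ (ltn_ord j)).
have eL (j : 'I_N) : e + j * n < n * N.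
  by have := ltn_ord e; have := ltn_ord j; nia.
have jL (j : 'I_N) : j * n < n * N by have := eL j; lia.
have kL (j : 'I_N) : k <= n * N.
  by have := ltn_ord k; have := ltn_ord j; nia.
pose f (j : 'I_N) := Ordinal (ltn_pmod (e + j * n + (n * N - k)) (L_gt0 j)).
have f_inj : injective f.
  move=> i j /(congr1 val) /eqP /=.
  rewrite eqn_modDr eqn_modDl !modn_small // => /eqP E.
  by apply: val_inj => /=; have := ltn_ord e; nia.
rewrite -(card_imset _ f_inj); apply: subset_leq_card.
apply/subsetP => _ /imsetP [j jS ->]; rewrite !inE; apply/andP; split.
  apply/existsP; exists k.
  have -> : (f j + k) %% (n * N) = e + j * n.
    by rewrite /= modnDml -addnA subnK ?kL // modnDr modn_small.
  by move: jS; rewrite inE mxE.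
rewrite /= modn_dvdm ?dvdn_mulr // -(modn_small (ltn_ord r)) -(eqn_modDr k).
by rewrite -addnA subnK ?kL // erk -addnA (mulnC n N) -mulnDl addnC modnMDl.
Qed.

Lemma w_b_ge_shadow (J : {set 'I_n}) (l : nat) : 0 < n -> b <= n ->
  (forall i : 'I_n, i \in J -> #|[set j : 'I_N | (Delta c i j != 0)%R]| = l) ->
  l * #|shadow b J| <= w_b b c.
Proof.
move=> n_gt0 bn rowJ.
apply: leq_trans (_ : \sum_(r in shadow b J) #|residue_class r| <= _).
  rewrite mulnC -sum_nat_const; apply: leq_sum => r.
  rewrite inE => /existsP [k /existsP [e /andP [eJ /eqP erk]]].
  by rewrite -(rowJ e eJ) (@row_support_le_residue_class e r k bn) // erk modn_mod.
pose residue (p : 'I_(n * N)) := Ordinal (ltn_pmod p n_gt0).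
rewrite /w_b -sum1_card (partition_big residue predT) //=.
rewrite [X in _ <= X](bigID [in shadow b J]) /=; apply: leq_trans (leq_addr _ _).
apply: eq_leq; apply: eq_bigr => r _; rewrite -sum1_card; apply: eq_bigl => p.
by rewrite inE; congr (_ && _); apply/eqP/eqP => [<- | /(congr1 val)].
Qed.

End Weight.

Unset Implicit Arguments.
Local Open Scope ring_scope.

Theorem mainTheorem2 (F : finFieldType) (n N b : nat) (J : {set 'I_n})
    (g l : nat) (c : 'rV[F]_(n * N)) :
  (1 <= n)%N -> (1 <= N)%N -> (1 <= b <= n)%N ->
  #|J| = g -> (0 < g)%N ->
  (forall i : 'I_n, i \in J -> #|[set j : 'I_N | Delta c i j != 0]| = l) ->
  (forall i : 'I_n, i \notin J -> forall j : 'I_N, Delta c i j = 0) ->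
  (l * (g + \sum_(H in holes J | #|H| <= b - 1) #|H|
          + \sum_(H in holes J | b <= #|H|) (b - 1)) <= w_b b c)%N.
Proof.
move=> n_gt0 _ /andP[b_gt0 bn] <- _ rowJ _.
apply: leq_trans (w_b_ge_shadow n_gt0 bn rowJ); apply: leq_mul => //.
apply: leq_trans (card_shadow_ge J b_gt0); rewrite -addnA leq_add2l sum_minn_split.
by apply: eq_leq; congr (_ + _); apply: eq_bigl => H; congr (_ && _); lia.
Qed.
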